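(* Let $G=(V,E)$ be a finite, simple, connected graph such that $\kappa(x,y)\geq K>0$ for all adjacent vertices $x\sim y$. Then \[ \operatorname{diam}_{\operatorname{eff}}(G)\leq \frac{\max_{v\in V}\operatorname{Deg}(v)}{K}. \]
   Context: $d$ denotes the combinatorial graph distance and $\operatorname{Deg}(v)=|\{w\in V: w\sim v\}|$. The effective diameter is $\operatorname{diam}_{\operatorname{eff}}(G)=\frac{1}{|V|^2}\sum_{x,y\in V}d(x,y)$. The (non-normalized) Laplacian is $\Delta f(x)=\sum_{y\sim x}(f(y)-f(x))$ for $f:V\to\mathbb{R}$. The Ollivier curvature of an edge $x\sim y$ is $\kappa(x,y)=\inf\{\Delta f(x)-\Delta f(y) : f:V\to\mathbb{R},\ f(y)-f(x)=1,\ \max_{u\sim v}|f(u)-f(v)|=1\}$. *)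

From mathcomp Require Import all_boot all_order all_algebra.
Set Implicit Arguments. Unset Strict Implicit. Unset Printing Implicit Defensive.
Import Order.TTheory GRing.Theory Num.Theory.
Local Open Scope ring_scope.

Definition simple_graph (T : finType) (e : rel T) : Prop :=
  symmetric e /\ irreflexive e.

Definition graph_connected (T : finType) (e : rel T) : Prop :=
  forall x y : T, connect e x y.

Definition gball (T : finType) (e : rel T) (x : T) (n : nat) : {set T} :=
  iter n (fun S : {set T} => S :|: [set y | [exists z in S, e z y]]) [set x].

(* combinatorial graph distance: least n with y in the n-ball of x
   (for connected graphs this n is < #|T|) *)
Definition gdist (T : finType) (e : rel T) (x y : T) : nat :=
  find (fun n => y \in gball e x n) (iota 0 #|T|).

Definition Deg (T : finType) (e : rel T) (v : T) : nat := #|[set w | e v w]|.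

Definition maxDeg (T : finType) (e : rel T) : nat := (\max_(v : T) Deg e v)%N.

Definition diam_eff (R : realFieldType) (T : finType) (e : rel T) : R :=
  (#|T|%:R ^+ 2)^-1 * \sum_(x : T) \sum_(y : T) (gdist e x y)%:R.

Definition laplacian (R : realFieldType) (T : finType) (e : rel T)
  (f : T -> R) (x : T) : R := \sum_(y : T | e x y) (f y - f x).

Definition curv_admissible (R : realFieldType) (T : finType) (e : rel T)
  (x y : T) (f : T -> R) : Prop :=
  f y - f x = 1 /\
  (forall u v, e u v -> `|f u - f v| <= 1) /\
  (exists u v, e u v /\ `|f u - f v| = 1).

(* kappa(x,y) >= K, i.e. K is a lower bound of the set whose infimum is kappa *)
Definition curv_ge (R : realFieldType) (T : finType) (e : rel T)
  (x y : T) (K : R) : Prop :=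
  forall f : T -> R, curv_admissible e x y f ->
    K <= laplacian e f x - laplacian e f y.

From mathcomp Require Import all_boot all_order all_algebra.
From mathcomp Require Import lra.
Set Implicit Arguments. Unset Strict Implicit. Unset Printing Implicit Defensive.
Import Order.TTheory GRing.Theory Num.Theory.
Local Open Scope ring_scope.

(* Fix x and let f := d(x, .). Along a geodesic, each edge (z, y) with
   d(x, y) = d(x, z) + 1 makes f admissible for the curvature of (z, y), so
   Delta f(z) - Delta f(y) >= K; telescoping gives
   K d(x, y) <= Delta f(x) - Delta f(y). Summing over y, the Laplacian sums
   to 0, and Delta f(x) <= Deg(x) since f is 1-Lipschitz with f(x) = 0; hence
   K sum_y d(x, y) <= |V| maxDeg. Summing over x gives the bound. *)

Section GraphDistance.

Variables (T : finType) (e : rel T).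

Lemma gballS x n y :
  (y \in gball e x n.+1) = (y \in gball e x n) || [exists z in gball e x n, e z y].
Proof. by rewrite /gball iterS in_setU inE. Qed.

Lemma gball0 x y : (y \in gball e x 0) = (y == x).
Proof. exact: in_set1. Qed.

Lemma gball_mono x m n y : (m <= n)%N -> y \in gball e x m -> y \in gball e x n.
Proof.
move=> /subnK <-; elim: (n - m)%N => [|k IHk] //= y_m.
by rewrite in_setU IHk.
Qed.

Lemma gball_path x p w n :
  w \in gball e x n -> path e w p -> last w p \in gball e x (n + size p).
Proof.
elim: p w n => [|z p IHp] w n w_n /=; first by rewrite addn0.
case/andP=> ewz z_p; rewrite addnS -addSn; apply: IHp z_p.
by rewrite gballS; apply/orP; right; apply/existsP; exists w; rewrite w_n ewz.
Qed.

Lemma connect_gball x y :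
  connect e x y -> exists2 n, (n < #|T|)%N & y \in gball e x n.
Proof.
case/connectP=> p0 /shortenP[p p_path p_uniq _] ->.
exists (size p).
  by have := max_card (mem (x :: p)); rewrite (card_uniqP p_uniq).
by have := @gball_path x p x 0%N; rewrite add0n gball0 eqxx; apply.
Qed.

Lemma mem_gball_gdist x y m :
  connect e x y -> (y \in gball e x m) = (gdist e x y <= m)%N.
Proof.
case/connect_gball=> n n_lt y_n.
have has_n : has (fun k => y \in gball e x k) (iota 0 #|T|).
  by apply/hasP; exists n; rewrite // mem_iota add0n n_lt.
have d_lt : (gdist e x y < #|T|)%N.
  by rewrite -[X in (_ < X)%N](size_iota 0 #|T|) -has_find.
have y_d : y \in gball e x (gdist e x y).
  by have := nth_find 0%N has_n; rewrite nth_iota.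
apply/idP/idP => [y_m | d_le]; last exact: gball_mono d_le y_d.
rewrite leqNgt; apply/negP => m_lt.
have := before_find 0%N m_lt; rewrite nth_iota ?add0n ?y_m //.
exact: ltn_trans m_lt d_lt.
Qed.

Lemma gdist_xx x : gdist e x x = 0%N.
Proof. by apply/eqP; rewrite -leqn0 -mem_gball_gdist ?connect0 ?gball0. Qed.

Lemma gdist0P x y : connect e x y -> gdist e x y = 0%N -> y = x.
Proof. by move=> xy d0; apply/eqP; rewrite -gball0 mem_gball_gdist ?d0. Qed.

Hypothesis e_connected : graph_connected e.

Lemma gdist_edge x u v : e u v -> (gdist e x v <= (gdist e x u).+1)%N.
Proof.
move=> euv; rewrite -mem_gball_gdist // gballS; apply/orP; right.
by apply/existsP; exists u; rewrite euv andbT mem_gball_gdist.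
Qed.

Lemma gdist_geodesic_pred x y n :
  gdist e x y = n.+1 -> exists2 z, e z y & gdist e x z = n.
Proof.
move=> dy.
have y_Sn : y \in gball e x n.+1 by rewrite mem_gball_gdist // dy.
have y_n : y \notin gball e x n by rewrite mem_gball_gdist // dy ltnn.
move: y_Sn; rewrite gballS (negbTE y_n) => /existsP[z /andP[z_n ezy]].
exists z => //; apply/eqP; rewrite eqn_leq -mem_gball_gdist // z_n /=.
by rewrite -ltnS -dy gdist_edge.
Qed.

Lemma gdist_lipschitz (R : realDomainType) x u v : symmetric e -> e u v ->
  `|(gdist e x u)%:R - (gdist e x v)%:R : R| <= 1.
Proof.
move=> e_sym euv.
have le_vu : (gdist e x v)%:R <= (gdist e x u)%:R + 1 :> R.
  by rewrite natr1 ler_nat gdist_edge.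
have le_uv : (gdist e x u)%:R <= (gdist e x v)%:R + 1 :> R.
  by rewrite natr1 ler_nat gdist_edge // e_sym.
by rewrite ler_norml; apply/andP; split; lra.
Qed.

End GraphDistance.

Lemma Deg_le_maxDeg (T : finType) (e : rel T) v : (Deg e v <= maxDeg e)%N.
Proof. exact: (leq_bigmax (F := Deg e)). Qed.

Section Laplacian.

Variables (R : realFieldType) (T : finType) (e : rel T).

Lemma sum_laplacian (f : T -> R) : symmetric e -> \sum_y laplacian e f y = 0.
Proof.
move=> e_sym; rewrite /laplacian.
under eq_bigr => y _ do rewrite sumrB.
rewrite sumrB (exchange_big_dep xpredT) //=; apply/eqP; rewrite subr_eq0.
by apply/eqP/eq_bigr => w _; apply: eq_bigl => y; rewrite e_sym.
Qed.

Lemma laplacian_gdist_le_Deg x : graph_connected e ->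
  laplacian e (fun w => (gdist e x w)%:R : R) x <= (Deg e x)%:R.
Proof.
move=> e_conn; rewrite /laplacian gdist_xx.
apply: (@le_trans _ _ (\sum_(w | e x w) 1)).
  apply: ler_sum => w exw; rewrite subr0 (ler_nat R _ 1).
  by have := gdist_edge e_conn x exw; rewrite gdist_xx.
by rewrite sumr_const /Deg cardsE.
Qed.

End Laplacian.

Section CurvatureBound.

Variables (R : realFieldType) (T : finType) (e : rel T) (K : R).
Hypotheses (e_sym : symmetric e) (e_connected : graph_connected e).
Hypothesis curv_K : forall u v, e u v -> curv_ge e u v K.

Let dist_from (x w : T) : R := (gdist e x w)%:R.

Lemma curv_admissible_gdist x z y :
  e z y -> gdist e x y = (gdist e x z).+1 -> curv_admissible e z y (dist_from x).
Proof.
move=> ezy dy; split; [|split].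
- by rewrite /dist_from dy -natr1 addrC addKr.
- by move=> u v euv; apply: gdist_lipschitz.
- exists z, y; split=> //.
  apply/eqP; rewrite eq_le (gdist_lipschitz e_connected R x e_sym ezy) /=.
  by rewrite /dist_from dy -natr1 opprD addNKr normrN normr1.
Qed.

Lemma laplacian_gdist_drop x y :
  K * dist_from x y <= laplacian e (dist_from x) x - laplacian e (dist_from x) y.
Proof.
rewrite /dist_from; move dxy: (gdist e x y) => n.
elim: n y dxy => [|n IHn] y dxy.
  by rewrite (gdist0P (e_connected x y) dxy) mulr0 subrr.
have [z ezy dxz] := gdist_geodesic_pred e_connected dxy.
have step : K <= laplacian e (dist_from x) z - laplacian e (dist_from x) y.
  by apply: (curv_K ezy); apply: curv_admissible_gdist; rewrite ?dxz.
have := IHn z dxz; rewrite -natr1 mulrDr mulr1 /dist_from; lra.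
Qed.

Lemma sum_gdist_le x : K * \sum_y (gdist e x y)%:R <= #|T|%:R * (maxDeg e)%:R.
Proof.
rewrite mulr_sumr.
apply: (@le_trans _ _ (\sum_y (laplacian e (dist_from x) x
                              - laplacian e (dist_from x) y))).
  by apply: ler_sum => y _; apply: laplacian_gdist_drop.
rewrite sumrB sum_laplacian // subr0 sumr_const -[_ *+ _]mulr_natl.
apply: ler_wpM2l => //.
apply: le_trans (laplacian_gdist_le_Deg R x e_connected) _.
by rewrite ler_nat Deg_le_maxDeg.
Qed.

End CurvatureBound.

Theorem theorem3p1 (R : realFieldType) (T : finType) (e : rel T) (K : R) :
  simple_graph e -> graph_connected e -> 0 < K ->
  (forall x y : T, e x y -> curv_ge e x y K) ->
  diam_eff R e <= (maxDeg e)%:R / K.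
Proof.
move=> [e_sym _] e_conn K_gt0 curv_K; rewrite /diam_eff.
have [->|T_gt0] := posnP #|T|.
  by rewrite expr0n invr0 mul0r divr_ge0 ?ler0n ?ltW.
have row_le x : \sum_y (gdist e x y)%:R <= #|T|%:R * ((maxDeg e)%:R / K) :> R.
  by rewrite mulrA ler_pdivlMr // mulrC sum_gdist_le.
rewrite ler_pdivrMl ?exprn_gt0 ?ltr0n //.
apply: le_trans (ler_sum _ (fun x _ => row_le x)) _.
by rewrite sumr_const -[_ *+ _]mulr_natl expr2 -mulrA.
Qed.
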